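(* Let $p\in\mathbb{R}[x_1,\ldots,x_n]_{2e}$ be a globally nonnegative homogeneous polynomial of degree $2e$ which is not a square, and let $h=y^2-p(x)$ where $y$ is a variable of degree $e$. If $h^r=\det(y\cdot I-A)$ for some $r\geq1$ and some real symmetric (resp. complex hermitian) matrix $A$ of size $2r$ whose entries are homogeneous polynomials of degree $e$ in $x_1,\ldots,x_n$, then $p$ is a sum of $2r$ squares in the symmetric case and a sum of $4r-1$ squares in the hermitian case. *)

From HB Require Import structures.
From mathcomp Require Import all_boot all_order all_algebra.
From mathcomp Require Import mpoly.
From mathcomp Require Import reals.
From mathcomp Require Import complex.
Set Implicit Arguments. Unset Strict Implicit. Unset Printing Implicit Defensive.
Import Order.TTheory GRing.Theory Num.Theory.
Local Open Scope ring_scope.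

Definition globally_nonneg (R : realType) (n : nat) (p : {mpoly R[n]}) : Prop :=
  forall v : 'I_n -> R, 0 <= p.@[v].

Definition is_square_poly (R : realType) (n : nat) (p : {mpoly R[n]}) : Prop :=
  exists q : {mpoly R[n]}, p = q ^+ 2.

Definition sum_of_squares (R : realType) (n k : nat) (p : {mpoly R[n]}) : Prop :=
  exists s : 'I_k -> {mpoly R[n]}, p = \sum_(i < k) (s i) ^+ 2.

(* the polynomial h = y^2 - p(x), seen as a polynomial in y with
   coefficients in R[x_1,...,x_n] *)
Definition hpoly (R : comRingType) (n : nat) (p : {mpoly R[n]}) : {poly {mpoly R[n]}} :=
  'X ^+ 2 - p%:P.

Definition homog_entries (R : ringType) (n m e : nat) (A : 'M[{mpoly R[n]}]_m) : Prop :=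
  forall i j, A i j \is e.-homog.

Definition symmetric_mx (T : Type) (m : nat) (A : 'M[T]_m) : Prop := A^T = A.

Definition hermitian_mx (R : realType) (n m : nat) (A : 'M[{mpoly R[i][n]}]_m) : Prop :=
  A^T = map_mx (map_mpoly (@conjc R)) A.

Definition cplx_mpoly (R : realType) (n : nat) (p : {mpoly R[n]}) : {mpoly R[i][n]} :=
  map_mpoly (real_complex R) p.

From HB Require Import structures.
From mathcomp Require Import all_boot all_order all_algebra.
From mathcomp Require Import mpoly.
From mathcomp Require Import reals.
From mathcomp Require Import complex.
From mathcomp Require Import zify ring.
Import Order.TTheory GRing.Theory Num.Theory.
Local Open Scope ring_scope.

(* By Cayley-Hamilton, N := A^2 - p I satisfies N^r = 0, and N is self-adjoint
   for M |-> M^* (transpose, conjugating coefficients in the hermitian case).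
   Over polynomials with real or complex coefficients the form
   sum_j s_j^* s_j is anisotropic, because its coefficient at twice the largest
   leading monomial is a sum of terms |c|^2 > 0.  So M^* M = 0 forces M = 0,
   the self-adjoint nilpotent N vanishes, and A^2 = p I.  The (0,0) entry gives
   p = sum_j |A_0j|^2 = sum_j (Re A_0j)^2 + (Im A_0j)^2, where Im A_00 = 0. *)

Definition anisotropic {T : nzRingType} (g : T -> T) (k : nat) : Prop :=
  forall s : 'I_k -> T, \sum_j g (s j) * s j = 0 -> forall j, s j = 0.

Lemma mlead_map_mpoly_le {S : nzRingType} {n : nat} (f : {additive S -> S})
    (p : {mpoly S[n]}) :
  (mlead (map_mpoly f p) <= mlead p)%O.
Proof.
have [->|fp_neq0] := eqVneq (map_mpoly f p) 0; first by rewrite mlead0 le0m.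
apply: msupp_le_mlead; move: (mlead_supp fp_neq0).
rewrite !mcoeff_msupp mcoeff_map_mpoly.
by apply: contra => /eqP ->; rewrite raddf0.
Qed.

Lemma map_mpoly_anisotropic (S : numDomainType) (n k : nat)
    (f : {rmorphism S -> S}) :
  (forall c, c != 0 -> 0 < f c * c) -> anisotropic (@map_mpoly n S S f) k.
Proof.
move=> f_pos q sum_eq0 j; apply/eqP/negPn/negP => qj_neq0.
have [jm qjm_neq0 jm_max] := @arg_maxP _ _ _ j (fun i => q i != 0)
  (fun i => mlead (q i)) qj_neq0.
set M := mlead (q jm).
have le_M i : (mlead (q i) <= M)%O.
  by have [->|/jm_max] := eqVneq (q i) 0; first by rewrite mlead0 le0m.
have f_nneg c : 0 <= f c * c.
  by have [->|/f_pos/ltW] := eqVneq c 0; first by rewrite mulr0.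
(* No leading monomial exceeds [M], so [M + M] picks [f (q i)@_M * (q i)@_M]. *)
have : \sum_i f (q i)@_M * (q i)@_M = 0.
  rewrite -[RHS](mcoeff0 _ (M + M)%MM) -sum_eq0 raddf_sum /=; apply: eq_bigr => i _.
  rewrite (mleadcMW (le_trans (mlead_map_mpoly_le f (q i)) (le_M i)) (le_M i)).
  by rewrite mcoeff_map_mpoly.
move/(psumr_eq0P (fun i _ => f_nneg _))/(_ jm isT)/eqP.
by apply/negP; rewrite lt0r_neq0 // f_pos // mleadc_eq0.
Qed.

Definition adjmx {T : Type} {m : nat} (g : T -> T) (M : 'M[T]_m) : 'M[T]_m :=
  map_mx g M^T.

Section SelfAdjoint.
Context {T : comNzRingType} {g : {rmorphism T -> T}} {m : nat}.
Hypothesis g_aniso : anisotropic g m.+1.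

Lemma adjmxM (M N : 'M[T]_m.+1) : adjmx g (M * N) = adjmx g N * adjmx g M.
Proof. by rewrite /adjmx -!mulmxE trmx_mul map_mxM. Qed.

Lemma adjmxX (M : 'M[T]_m.+1) k : adjmx g (M ^+ k) = adjmx g M ^+ k.
Proof.
elim: k => [|k IHk]; first by rewrite /adjmx !expr0 trmx1 map_mx1.
by rewrite exprS adjmxM IHk exprSr.
Qed.

Lemma adjmx_mul_eq0 (M : 'M[T]_m.+1) : adjmx g M * M = 0 -> M = 0.
Proof.
move=> MM_eq0; apply/matrixP => i j; rewrite mxE.
apply: (g_aniso (fun k => M k j)).
have := congr1 (fun X : 'M_m.+1 => X j j) MM_eq0; rewrite -mulmxE !mxE => MMjj_eq0.
by rewrite -[RHS]MMjj_eq0; apply: eq_bigr => k _; rewrite !mxE.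
Qed.

(* [N ^+ 2^(k+1) = adjmx g (N ^+ 2^k) * N ^+ 2^k], so vanishing halves the exponent. *)
Lemma self_adjoint_nilpotent_eq0 (N : 'M[T]_m.+1) k :
  adjmx g N = N -> N ^+ k = 0 -> N = 0.
Proof.
move=> adjN Nk_eq0.
have : N ^+ (2 ^ k) = 0.
  by rewrite -(subnK (ltnW (ltn_expl k (ltnSn 1)))) exprD Nk_eq0 mulr0.
elim: k {Nk_eq0} => [|k IHk]; first by rewrite expr1.
rewrite expnS mul2n -addnn exprD => N2k_eq0; apply/IHk/adjmx_mul_eq0.
by rewrite adjmxX adjN.
Qed.

Lemma char_poly_sqr_pow_mul_self (A : 'M[T]_m.+1) (c : T) r :
    adjmx g A = A -> g c = c -> char_poly A = ('X ^+ 2 - c%:P) ^+ r ->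
  A * A = c%:M.
Proof.
move=> adjA gc chA; set N := A * A - c%:M.
have adjN : adjmx g N = N.
  rewrite /adjmx linearB /= map_mxB -/(adjmx g _) adjmxM adjA.
  by rewrite tr_scalar_mx map_scalar_mx gc.
have Nr_eq0 : N ^+ r = 0.
  have := Cayley_Hamilton A.
  by rewrite chA rmorphXn rmorphB /= horner_mx_C rmorphXn /= horner_mx_X expr2.
apply/eqP; rewrite -subr_eq0; apply/eqP.
exact: (self_adjoint_nilpotent_eq0 N r adjN Nr_eq0).
Qed.

Lemma char_poly_sqr_pow_sum (A : 'M[T]_m.+1) (c : T) r :
    adjmx g A = A -> g c = c -> char_poly A = ('X ^+ 2 - c%:P) ^+ r ->
  c = \sum_j g (A ord0 j) * A ord0 j.
Proof.
move=> adjA gc chA.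
have AA := char_poly_sqr_pow_mul_self A c r adjA gc chA.
have := congr1 (fun X : 'M_m.+1 => X ord0 ord0) AA.
rewrite -mulmxE !mxE mulr1n => <-.
by apply: eq_bigr => j _; rewrite mulrC -{1}adjA !mxE.
Qed.

End SelfAdjoint.

Lemma sum_of_squaresD (R : realType) (n k l : nat) (p q : {mpoly R[n]}) :
  sum_of_squares k p -> sum_of_squares l q -> sum_of_squares (k + l) (p + q).
Proof.
move=> [a ->] [b ->].
exists (fun i => match split i with inl j => a j | inr j => b j end).
rewrite big_split_ord /=; congr (_ + _); apply: eq_bigr => j _.
  by rewrite -[lshift _ j]/(unsplit (inl j)) unsplitK.
by rewrite -[rshift _ j]/(unsplit (inr j)) unsplitK.
Qed.

Lemma map_mpoly_id {S : nzRingType} {n : nat} (f : {additive S -> S})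
    (q : {mpoly S[n]}) :
  f =1 id -> map_mpoly f q = q.
Proof. by move=> fE; apply/mpolyP => m; rewrite mcoeff_map_mpoly fE. Qed.

Lemma map_mpolyK {S1 S2 : nzRingType} {n : nat} (f : {additive S1 -> S2})
    (g : {additive S2 -> S1}) :
  cancel f g -> cancel (@map_mpoly n _ _ f) (map_mpoly g).
Proof. by move=> fK q; apply/mpolyP => m; rewrite !mcoeff_map_mpoly fK. Qed.

Lemma conjcE (R : rcfType) (x : R[i]) :
  x^*%C = (complex.Re x)%:C%C - 'i%C * (complex.Im x)%:C%C.
Proof.
case: x => a b; apply/eqP; rewrite eq_complex /=.
by rewrite !(mul0r, mul1r, mulr0, oppr0, subr0, sub0r, add0r) !eqxx.
Qed.

Section ComplexMpoly.
Context {R : realType} {n : nat}.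
Implicit Types (q : {mpoly R[i][n]}) (a : {mpoly R[n]}).

Definition re_mpoly q : {mpoly R[n]} := map_mpoly (@complex.Re R) q.
Definition im_mpoly q : {mpoly R[n]} := map_mpoly (@complex.Im R) q.
Definition conj_mpoly q : {mpoly R[i][n]} := map_mpoly (@conjc R) q.

Lemma mcoeff_cplx_mpoly a m : (cplx_mpoly a)@_m = (a@_m)%:C%C.
Proof. exact: mcoeff_map_mpoly. Qed.

Lemma mcoeff_re_mpoly q m : (re_mpoly q)@_m = complex.Re q@_m.
Proof. exact: mcoeff_map_mpoly. Qed.

Lemma mcoeff_im_mpoly q m : (im_mpoly q)@_m = complex.Im q@_m.
Proof. exact: mcoeff_map_mpoly. Qed.

Lemma mcoeff_conj_mpoly q m : (conj_mpoly q)@_m = (q@_m)^*%C.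
Proof. exact: mcoeff_map_mpoly. Qed.

Lemma mpoly_complexE q :
  q = cplx_mpoly (re_mpoly q) + 'i%C *: cplx_mpoly (im_mpoly q).
Proof.
apply/mpolyP => m; rewrite mcoeffD mcoeffZ [LHS]complexE.
by congr (_ + _ * _); rewrite [RHS]mcoeff_cplx_mpoly ?mcoeff_re_mpoly ?mcoeff_im_mpoly.
Qed.

Lemma conj_cplx_mpoly a : conj_mpoly (cplx_mpoly a) = cplx_mpoly a.
Proof.
by apply/mpolyP => m; rewrite [LHS]mcoeff_conj_mpoly !mcoeff_cplx_mpoly conjc_real.
Qed.

Lemma conj_mpolyE q :
  conj_mpoly q = cplx_mpoly (re_mpoly q) - 'i%C *: cplx_mpoly (im_mpoly q).
Proof.
apply/mpolyP => m; rewrite mcoeffB mcoeffZ [LHS]mcoeff_conj_mpoly conjcE.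
by congr (_ - _ * _); rewrite [RHS]mcoeff_cplx_mpoly ?mcoeff_re_mpoly ?mcoeff_im_mpoly.
Qed.

Lemma mul_conj_mpoly q :
  conj_mpoly q * q = cplx_mpoly (re_mpoly q ^+ 2 + im_mpoly q ^+ 2).
Proof.
rewrite [X in _ * X]mpoly_complexE conj_mpolyE.
have -> : cplx_mpoly (re_mpoly q ^+ 2 + im_mpoly q ^+ 2) =
    cplx_mpoly (re_mpoly q) ^+ 2 + cplx_mpoly (im_mpoly q) ^+ 2.
  by rewrite /cplx_mpoly rmorphD !rmorphXn.
move: (cplx_mpoly (re_mpoly q)) (cplx_mpoly (im_mpoly q)) => a b; rewrite -!mul_mpolyC.
have I2 : ('i%C)%:MP_[n] * ('i%C)%:MP_[n] = -1 :> {mpoly R[i][n]}.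
  by rewrite -mpolyCM -expr2 sqr_i mpolyCN mpolyC1.
move: ('i%C)%:MP_[n] I2 => I I2.
have -> : (a - I * b) * (a + I * b) = a ^+ 2 - I * I * b ^+ 2 by ring.
by rewrite I2 mulN1r opprK.
Qed.

Lemma cplx_mpoly_inj : injective (@cplx_mpoly R n).
Proof.
exact: can_inj (@map_mpolyK _ _ n (real_complex R) (@complex.Re R) (fun x => erefl)).
Qed.

Lemma im_mpoly_conj_eq0 q : conj_mpoly q = q -> im_mpoly q = 0.
Proof.
move=> qJ; apply/mpolyP => m; rewrite mcoeff_im_mpoly mcoeff0.
have := congr1 (mcoeff m) qJ; rewrite [LHS]mcoeff_conj_mpoly.
by case: (q@_m) => a b [] /eqP; rewrite eq_sym -subr_eq0 opprK -mulr2n mulrn_eq0 => /eqP.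
Qed.

End ComplexMpoly.

Lemma symmetric_char_poly_sos (R : realType) (n m r : nat)
    (A : 'M[{mpoly R[n]}]_m.+1) (p : {mpoly R[n]}) :
  symmetric_mx A -> char_poly A = hpoly p ^+ r -> sum_of_squares m.+1 p.
Proof.
rewrite /symmetric_mx => symA chA; exists (A ord0).
have idE (q : {mpoly R[n]}) : map_mpoly idfun q = q by exact: map_mpoly_id.
have aniso : anisotropic (@map_mpoly n _ _ (@idfun R)) m.+1.
  apply: map_mpoly_anisotropic => c c_neq0.
  by rewrite lt0r mulf_neq0 //= -expr2 sqr_ge0.
have adjA : adjmx (map_mpoly idfun) A = A by rewrite /adjmx (map_mx_id idE) symA.
rewrite (char_poly_sqr_pow_sum aniso A p r adjA (idE p) chA).
by apply: eq_bigr => j _; rewrite expr2; congr (_ * _); exact: idE.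
Qed.

Lemma hermitian_char_poly_sos (R : realType) (n m r : nat)
    (A : 'M[{mpoly R[i][n]}]_m.+1) (p : {mpoly R[n]}) :
    hermitian_mx A -> char_poly A = hpoly (cplx_mpoly p) ^+ r ->
  sum_of_squares (m.+1 + m) p.
Proof.
rewrite /hermitian_mx => hermA chA.
have aniso : anisotropic (@map_mpoly n _ _ (@conjc R)) m.+1.
  apply: map_mpoly_anisotropic => c c_neq0.
  by rewrite mulrC lt0r mulf_neq0 ?conjc_eq0 //= mulcJ_ge0.
have adjA : adjmx (map_mpoly (@conjc R)) A = A.
  by apply/matrixP => i j; rewrite mxE hermA mxE (map_mpolyK _ _ (@conjcK R)).
have pE : p = \sum_j (re_mpoly (A ord0 j) ^+ 2 + im_mpoly (A ord0 j) ^+ 2).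
  apply: cplx_mpoly_inj.
  rewrite [LHS](char_poly_sqr_pow_sum aniso A _ r adjA (conj_cplx_mpoly p) chA).
  by rewrite /cplx_mpoly rmorph_sum; apply: eq_bigr => j _; exact: mul_conj_mpoly.
have imA00 : im_mpoly (A ord0 ord0) = 0.
  apply: im_mpoly_conj_eq0.
  by have := congr1 (fun X : 'M_m.+1 => X ord0 ord0) hermA; rewrite !mxE => /esym.
rewrite pE big_split /=; apply: sum_of_squaresD.
  by exists (fun j => re_mpoly (A ord0 j)).
rewrite big_ord_recl imA00 expr0n add0r.
by exists (fun j => im_mpoly (A ord0 (lift ord0 j))).
Qed.

Theorem lemma9p4 (R : realType) (n e r : nat) (p : {mpoly R[n]}) :
  p \is (2 * e)%N.-homog ->
  globally_nonneg p ->
  ~ is_square_poly p ->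
  (0 < r)%N ->
  (forall A : 'M[{mpoly R[n]}]_(2 * r),
      homog_entries e A -> symmetric_mx A ->
      hpoly p ^+ r = char_poly A ->
      sum_of_squares (2 * r) p)
  /\
  (forall A : 'M[{mpoly R[i][n]}]_(2 * r),
      homog_entries e A -> hermitian_mx A ->
      hpoly (cplx_mpoly p) ^+ r = char_poly A ->
      sum_of_squares (4 * r - 1) p).
Proof.
move=> _ _ _ r_gt0.
have -> : (4 * r - 1 = 2 * r + (2 * r).-1)%N by lia.
have : (0 < 2 * r)%N by lia.
case: (2 * r)%N => // m _; split=> A _ AJ chA.
  exact: symmetric_char_poly_sos AJ (esym chA).
exact: hermitian_char_poly_sos AJ (esym chA).
Qed.
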